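(* Let $\Gamma_\mu:\mathbb{R}^N_+\to\mathbb{R}^N_+$ be the operator induced by $\Gamma\in(\mathcal{K}_\infty\cup\{0\})^{N\times N}$ and monotone aggregation functions $\mu_1,\dots,\mu_N$, satisfying the small gain condition $\Gamma_\mu(s)\not\ge s$ for all $s\in\mathbb{R}^N_+\setminus\{0\}$, and assume $\Gamma$ has no zero row, i.e. $\Gamma_\mu(e)_i\neq0$ for all $i$. Let $\kappa_0>0$, $\kappa_\Gamma>\kappa_h>0$, let $\phi$ be as in the context and let $c\in\mathbb{R}^N$ with $c\gg0$ and $\|c\|<\kappa_\Gamma/2$. Then there exists $\delta>0$ such that: for every $(N+1)$-simplex $\langle y^1,\dots,y^{N+2}\rangle$ of $\tilde K_1(\delta)$ (so $y^{N+2}=y^1+(\delta,\dots,\delta,1)^\top$), writing $y^j=(v^j,t_j)$, if $v^j\in\mathbb{R}^N_+$ and $\kappa_\Gamma/2\le\|v^j\|<\kappa_\Gamma+\kappa_0$ for $j=1,\dots,N+1$ and $\kappa_\Gamma+\kappa_0\le\|v^{N+2}\|\le\kappa_\Gamma+\kappa_0+\delta$, then the facet $\tau=\langle y^1,\dots,y^{N+1}\rangle$ is not complete. Moreover $\delta$ can be chosen so that in addition $\delta\sqrt N<(\kappa_\Gamma-\kappa_h)/2$, whence every point of $\mathbb{R}^N_+$ at distance less than $\delta\sqrt N$ from a fixed point of $\phi$ has norm less than $\kappa_\Gamma/2$.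
   Context: Order on $\mathbb{R}^N$: $v\ge w$ iff $v_i\ge w_i$ for all $i$; $v>w$ iff $v\ge w$, $v\ne w$; $v\gg w$ iff $v_i>w_i$ for all $i$. $\|\cdot\|$ Euclidean norm, $e=(1,\dots,1)^\top$. $\mathcal{K}_\infty$: continuous, strictly increasing, unbounded $\gamma:\mathbb{R}_+\to\mathbb{R}_+$ with $\gamma(0)=0$; $0$ denotes the zero function. A monotone aggregation function is a continuous $\mu_i:\mathbb{R}^N_+\to\mathbb{R}_+$ with $\mu_i(s)=0$ iff $s=0$, $\mu_i(s)<\mu_i(t)$ whenever $s\ll t$, and $\mu_i(s)\to\infty$ as $\|s\|\to\infty$. The induced operator is $\Gamma_\mu(s)_i=\mu_i(\gamma_{i1}(s_1),\dots,\gamma_{iN}(s_N))$. Given $\kappa_0>0$, $\kappa_\Gamma>\kappa_h>0$, $\phi(v)=\Gamma_\mu(v)\big(1+\min\{0,\frac{\kappa_\Gamma-2\|v\|}{\|v\|+\kappa_0}\}\big)+\max\{0,\kappa_h-2\|v\|\}e$ for $v\in\mathbb{R}^N_+$. Triangulation $\tilde K_1(\delta)$: with $P=\mathrm{diag}(\delta,\dots,\delta,1)$, its $(N+1)$-simplices are $\langle y^1,\dots,y^{N+2}\rangle$ with $y^1=(\delta z,0)$, $z\in\mathbb{Z}^N$, $y^{i+1}=y^i+Pe_{\pi(i)}$ for a permutation $\pi$ of $\{1,\dots,N+1\}$; all vertices lie in $\mathbb{R}^N\times\{0,1\}$ and are componentwise increasing. Its $N$-simplices are the facets of these. Homotopy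 $\vartheta(v,t)=(1-t)c+t\phi(v)$; labeling $l(v,t)=\vartheta(v,t)-v$. Labeling matrix $L(\tau)$ of $\tau=\langle y^1,\dots,y^{N+1}\rangle$: $(N+1)\times(N+1)$ with $j$-th column $(1,l(y^j)^\top)^\top$. $W\succ0$ (lexicographically positive) means the first nonzero entry of each row of $W$ is positive. $\tau$ is complete if $L(\tau)W=I_{N+1}$ has a solution $W\succ0$. *)

From Stdlib Require Import Reals.
From mathcomp Require Import all_boot all_fingroup.
Set Implicit Arguments.
Unset Strict Implicit.
Unset Printing Implicit Defensive.

Local Open Scope R_scope.

Definition vec (N : nat) := 'I_N -> R.

Definition sumR (n : nat) (f : 'I_n -> R) : R := \big[Rplus/0]_(i < n) f i.

Definition vnorm (N : nat) (v : vec N) : R := sqrt (sumR (fun i => v i * v i)).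

Definition vsub (N : nat) (v w : vec N) : vec N := fun i => v i - w i.

Definition vzero (N : nat) : vec N := fun _ => 0.
Definition vones (N : nat) : vec N := fun _ => 1.

Definition vnonneg (N : nat) (v : vec N) : Prop := forall i, 0 <= v i.
Definition vge (N : nat) (v w : vec N) : Prop := forall i, w i <= v i.
Definition vgg (N : nat) (v w : vec N) : Prop := forall i, w i < v i.

(* class K_infinity, functions on R_+ (values on negatives irrelevant) *)
Definition K_inf (g : R -> R) : Prop :=
  (forall x, 0 <= x -> 0 <= g x) /\
  (forall x, 0 <= x -> forall eps, 0 < eps -> exists d, 0 < d /\
       forall y, 0 <= y -> Rabs (y - x) < d -> Rabs (g y - g x) < eps) /\
  (forall x y, 0 <= x -> x < y -> g x < g y) /\
  (forall M, exists x, 0 <= x /\ M < g x) /\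
  g 0 = 0.

Definition zero_fun (g : R -> R) : Prop := forall x, 0 <= x -> g x = 0.

Definition MAF (N : nat) (mu : vec N -> R) : Prop :=
  (forall s, vnonneg s -> forall eps, 0 < eps -> exists d, 0 < d /\
      forall t, vnonneg t -> vnorm (vsub t s) < d -> Rabs (mu t - mu s) < eps) /\
  (forall s, vnonneg s -> 0 <= mu s) /\
  (forall s, vnonneg s -> (mu s = 0 <-> s = @vzero N)) /\
  (forall s t, vnonneg s -> vnonneg t -> vgg t s -> mu s < mu t) /\
  (forall M, exists K, forall s, vnonneg s -> K < vnorm s -> M < mu s).

Definition Gamma_mu (N : nat) (gam : 'I_N -> 'I_N -> R -> R)
  (mu : 'I_N -> vec N -> R) (s : vec N) : vec N :=
  fun i => mu i (fun j => gam i j (s j)).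

Definition phi (N : nat) (gam : 'I_N -> 'I_N -> R -> R)
  (mu : 'I_N -> vec N -> R) (k0 kG kh : R) (v : vec N) : vec N :=
  fun i => Gamma_mu gam mu v i *
             (1 + Rmin 0 ((kG - 2 * vnorm v) / (vnorm v + k0)))
           + Rmax 0 (kh - 2 * vnorm v).

Definition pt (N : nat) : Type := (vec N * R)%type.

Definition label (N : nat) (gam : 'I_N -> 'I_N -> R -> R)
  (mu : 'I_N -> vec N -> R) (k0 kG kh : R) (c : vec N) (y : pt N) : vec N :=
  fun i => (1 - snd y) * c i + snd y * phi gam mu k0 kG kh (fst y) i - fst y i.

(* Vertices of the (N+1)-simplex of K~_1(delta) given by z in Z^N and a
   permutation pi of the N+1 coordinates.  Vertex j (j = 0,...,N+1, i.e.
   y^{j+1} of the paper) is y^1 + sum_{i<j} P e_{pi(i)}; coordinate N is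
   the homotopy coordinate t. *)
Definition moved (N : nat) (pi : {perm 'I_N.+1}) (j : nat) (k : 'I_N.+1) : bool :=
  [exists i : 'I_N.+1, ((nat_of_ord i < j)%N && (pi i == k))].

Definition vertex (N : nat) (delta : R) (z : 'I_N -> Z) (pi : {perm 'I_N.+1})
  (j : nat) : pt N :=
  ((fun k : 'I_N => delta * IZR (z k)
       + (if moved pi j (widen_ord (leqnSn N) k) then delta else 0)),
   (if moved pi j ord_max then 1 else 0)).

Definition lexpos (n : nat) (W : 'I_n -> 'I_n -> R) : Prop :=
  forall r, exists k : 'I_n,
    (forall k' : 'I_n, (nat_of_ord k' < nat_of_ord k)%N -> W r k' = 0) /\ 0 < W r k.

(* labeling matrix of an N-simplex with vertices ys 0, ..., ys N:
   column j is (1, l(ys j)) *)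
Definition labmat (N : nat) (l : pt N -> vec N) (ys : 'I_N.+1 -> pt N)
  : 'I_N.+1 -> 'I_N.+1 -> R :=
  fun r j => match unlift ord0 r with
             | None => 1
             | Some i => l (ys j) i
             end.

Definition complete (N : nat) (l : pt N -> vec N) (ys : 'I_N.+1 -> pt N) : Prop :=
  exists W : 'I_N.+1 -> 'I_N.+1 -> R,
    (forall r c, sumR (fun k => labmat l ys r k * W k c) = if r == c then 1 else 0)
    /\ lexpos W.

From Stdlib Require Import Reals Lra.
From HB Require Import structures.
From mathcomp Require Import all_boot all_fingroup.
Local Open Scope R_scope.

(* Suppose a facet tau = <y^1,...,y^{N+1}> of an (N+1)-simplex touching the
   outer shell |v| = kG + k0 is complete.  The first column of a
   lexicographically positive solution W of L(tau) W = I is a probability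
   vector lam with sum_k lam_k l(y^k) = 0, i.e. sum_k lam_k theta(y^k) =
   sum_k lam_k v^k >= v^1 (v^1 is the componentwise least vertex).  Near the
   shell the damping factor of phi is at most delta sqrt N / k0, so
   theta(y^k) <= c + (delta sqrt N / k0) T with T bounding Gamma_mu on the ball
   of radius kG + k0. *)

HB.instance Definition _ := Monoid.isComLaw.Build R 0 Rplus
  (fun x y z => esym (Rplus_assoc x y z)) Rplus_comm Rplus_0_l.

Lemma sumR_ext {n} {f g : 'I_n -> R} : (forall i, f i = g i) -> sumR f = sumR g.
Proof. by move=> Hfg; apply: eq_bigr => i _. Qed.

Lemma sumR_le {n} {f g : 'I_n -> R} : (forall i, f i <= g i) -> sumR f <= sumR g.
Proof.
by move=> Hfg; apply: (big_ind2 (fun a b => a <= b)) => [|*|i _]; [lra|lra|].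
Qed.

Lemma sumR_nonneg {n} {f : 'I_n -> R} : (forall i, 0 <= f i) -> 0 <= sumR f.
Proof. by move=> Hf; apply: (big_ind (fun a => 0 <= a)) => [|*|i _]; [lra|lra|]. Qed.

Lemma sumR_mull {n} (f : 'I_n -> R) k : sumR (fun i => k * f i) = k * sumR f.
Proof. by apply: (big_ind2 (fun a b => a = k * b)) => [|? ? ? ? -> ->|]; [ring|ring|]. Qed.

Lemma sumR_add {n} (f g : 'I_n -> R) : sumR (fun i => f i + g i) = sumR f + sumR g.
Proof. exact: big_split. Qed.

Lemma sumR_const n k : sumR (fun _ : 'I_n => k) = INR n * k.
Proof.
rewrite /sumR big_const_ord; elim: n => [|n IH]; first by rewrite /=; ring.
by rewrite iterS IH S_INR; ring.
Qed.

Lemma sumR_ge_term {n} {f : 'I_n -> R} j : (forall i, 0 <= f i) -> f j <= sumR f.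
Proof.
move=> Hf; rewrite /sumR (bigD1 j) //=.
have le_addr x y : 0 <= y -> x <= x + y by lra.
by apply/le_addr/(big_ind (fun a => 0 <= a)) => [|*|i _]; [lra|lra|].
Qed.

Definition dot {N : nat} (a b : vec N) : R := sumR (fun i => a i * b i).

Section EuclideanNorm.
Context {N : nat}.
Implicit Types a b : vec N.

Lemma dot_self_ge0 a : 0 <= dot a a.
Proof. by apply: sumR_nonneg => i; apply: Rle_0_sqr. Qed.

Lemma vnorm_ge0 a : 0 <= vnorm a.
Proof. exact: sqrt_pos. Qed.

Lemma vnorm_sqr a : vnorm a * vnorm a = dot a a.
Proof. exact/sqrt_sqrt/dot_self_ge0. Qed.

Lemma vnorm_ext a b : (forall i, a i = b i) -> vnorm a = vnorm b.
Proof. by move=> Hab; rewrite /vnorm; f_equal; apply: sumR_ext => i; rewrite Hab. Qed.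

Lemma vnorm_mono a b : (forall i, 0 <= a i <= b i) -> vnorm a <= vnorm b.
Proof. by move=> Hab; apply/sqrt_le_1_alt/sumR_le => i; have := Hab i; nra. Qed.

Lemma vnorm_comp a i : Rabs (a i) <= vnorm a.
Proof.
rewrite -sqrt_Rsqr_abs; apply: sqrt_le_1_alt.
by apply: sumR_ge_term => k; apply: Rle_0_sqr.
Qed.

Lemma vnorm_const d : 0 <= d -> vnorm (fun _ : 'I_N => d) = d * sqrt (INR N).
Proof.
move=> Hd; rewrite /vnorm sumR_const Rmult_comm sqrt_mult ?sqrt_square //.
- exact: Rle_0_sqr.
- exact: pos_INR.
Qed.

Lemma vnorm_vzero : vnorm (@vzero N) = 0.
Proof. by rewrite /vzero vnorm_const; [ring|lra]. Qed.

Lemma vnorm_scal a k : 0 <= k -> vnorm (fun i => k * a i) = k * vnorm a.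
Proof.
move=> Hk; rewrite /vnorm (sumR_ext (g := fun i => (k * k) * (a i * a i))) => [|i]; last by ring.
by rewrite sumR_mull sqrt_mult ?sqrt_square //; [exact: Rle_0_sqr|exact: dot_self_ge0].
Qed.

Lemma dot_comb x y a b :
  let u := fun i => x * a i + y * b i in
  dot u u = x * x * dot a a + 2 * x * y * dot a b + y * y * dot b b.
Proof.
rewrite /dot (sumR_ext (g := fun i => x * x * (a i * a i)
   + (2 * x * y * (a i * b i) + y * y * (b i * b i)))) => [|i]; last by ring.
by rewrite !sumR_add !sumR_mull; ring.
Qed.

(* Cauchy-Schwarz: expand |(|b|) a - (|a|) b|^2 >= 0. *)
Lemma dot_le_vnorm a b : dot a b <= vnorm a * vnorm b.
Proof.
have zero_dot (c d : vec N) : vnorm c = 0 -> dot c d = 0.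
  move=> Hc; rewrite /dot (sumR_ext (g := fun _ => 0)) => [|i].
    by rewrite sumR_const; ring.
  have Hci : c i = 0.
    by have := vnorm_comp c i; have := Rle_abs (- c i); rewrite Rabs_Ropp Hc;
       have := Rle_abs (c i); lra.
  by rewrite Hci; ring.
have [Ha|Ha] := Req_dec (vnorm a) 0; first by rewrite zero_dot // Ha; lra.
have [Hb|Hb] := Req_dec (vnorm b) 0.
  have dotC : dot a b = dot b a by apply: sumR_ext => i; ring.
  by rewrite dotC zero_dot // Hb; lra.
have Hp : 0 < vnorm a * vnorm b.
  by have := vnorm_ge0 a; have := vnorm_ge0 b; move: Ha Hb; nra.
have Hsq := dot_self_ge0 (fun i => vnorm b * a i + - vnorm a * b i).
rewrite dot_comb -(vnorm_sqr a) -(vnorm_sqr b) in Hsq.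
have : 0 <= (vnorm a * vnorm b) * (vnorm a * vnorm b - dot a b) by nra.
nra.
Qed.

Lemma vnorm_add a b : vnorm (fun i => a i + b i) <= vnorm a + vnorm b.
Proof.
rewrite (vnorm_ext _ (fun i => 1 * a i + 1 * b i)) => [|i]; last by ring.
have := vnorm_sqr (fun i => 1 * a i + 1 * b i).
rewrite dot_comb -(vnorm_sqr a) -(vnorm_sqr b).
have := dot_le_vnorm a b; have := vnorm_ge0 a; have := vnorm_ge0 b.
have := vnorm_ge0 (fun i => 1 * a i + 1 * b i); nra.
Qed.

End EuclideanNorm.

(* The vector T_i = mu_i (gamma_i1(r) + 1, ..., gamma_iN(r) + 1), which strictly
   dominates Gamma_mu on the ball of radius r (see Gamma_le_ball). *)
Definition Gamma_ball_bound {N : nat} (gam : 'I_N -> 'I_N -> R -> R)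
  (mu : 'I_N -> vec N -> R) (r : R) : vec N :=
  fun i => mu i (fun j => gam i j r + 1).

Section InducedOperator.
Context {N : nat} {gam : 'I_N -> 'I_N -> R -> R} {mu : 'I_N -> vec N -> R}.
Hypothesis Hgam : forall i j, K_inf (gam i j) \/ zero_fun (gam i j).
Hypothesis Hmu : forall i, MAF (mu i).

Lemma gam_nonneg i j x : 0 <= x -> 0 <= gam i j x.
Proof. by move=> Hx; case: (Hgam i j) => [[Hpos _]|Hzero]; [apply: Hpos|rewrite Hzero //; lra]. Qed.

Lemma gam_mono i j x y : 0 <= x -> x <= y -> gam i j x <= gam i j y.
Proof.
move=> Hx Hxy; case: (Hgam i j) => [[_ [_ [Hinc _]]]|Hzero]; last by rewrite !Hzero; lra.
by case: (Rle_lt_or_eq_dec _ _ Hxy) => [Hlt|->]; [apply/Rlt_le/Hinc|lra].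
Qed.

Lemma Gamma_nonneg v i : vnonneg v -> 0 <= Gamma_mu gam mu v i.
Proof. by move=> Hv; case: (Hmu i) => [_ [Hpos _]]; apply: Hpos => j; apply: gam_nonneg. Qed.

Lemma Gamma_le_ball v i r : vnonneg v -> vnorm v <= r ->
  Gamma_mu gam mu v i <= Gamma_ball_bound gam mu r i.
Proof.
move=> Hv Hvr; case: (Hmu i) => [_ [_ [_ [Hinc _]]]].
have Hr : 0 <= r by have := vnorm_ge0 v; lra.
apply/Rlt_le/Hinc => j; first exact: gam_nonneg.
  by have := gam_nonneg i j r Hr; lra.
have Hvj : v j <= r by have := vnorm_comp v j; have := Rle_abs (v j); lra.
by have := gam_mono i j _ _ (Hv j) Hvj; lra.
Qed.

(* Under the small gain condition, every fixed point of phi lies in the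
   region |v| < kh/2 where the additive term max{0, kh - 2|v|} is active:
   elsewhere phi(v) <= Gamma_mu(v), so v <= Gamma_mu(v) would follow. *)
Lemma phi_fixed_point_small {k0 kG kh : R} {v : vec N} :
  (forall s : vec N, vnonneg s -> s <> @vzero N -> ~ vge (Gamma_mu gam mu s) s) ->
  0 < kh -> vnonneg v -> phi gam mu k0 kG kh v = v -> vnorm v < kh / 2.
Proof.
move=> Hsg Hkh Hv Hfix; apply: Rnot_le_lt => Hlarge.
set f := 1 + Rmin 0 ((kG - 2 * vnorm v) / (vnorm v + k0)).
have Hf : f <= 1 by have := Rmin_l 0 ((kG - 2 * vnorm v) / (vnorm v + k0)); rewrite /f; lra.
apply: (Hsg v Hv) => [Hv0|i]; first by move: Hlarge; rewrite Hv0 vnorm_vzero; lra.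
have := f_equal (fun g => g i) Hfix; rewrite /phi -/f Rmax_left; last by lra.
by have := Gamma_nonneg v i Hv; have := Hv i; nra.
Qed.

Lemma near_phi_fixed_point_small {k0 kG kh : R} {v w : vec N} {r : R} :
  (forall s : vec N, vnonneg s -> s <> @vzero N -> ~ vge (Gamma_mu gam mu s) s) ->
  0 < kh -> r <= (kG - kh) / 2 -> vnonneg v -> phi gam mu k0 kG kh v = v ->
  vnorm (vsub w v) < r -> vnorm w < kG / 2.
Proof.
move=> Hsg Hkh Hr Hv Hfix Hwv.
have Hv_small := phi_fixed_point_small Hsg Hkh Hv Hfix.
have := vnorm_add v (vsub w v).
by rewrite (vnorm_ext _ w) => [|i]; [lra|rewrite /vsub; ring].
Qed.

(* Near the outer shell |v| = kG + k0 the damping factor of phi,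
   (kG + k0 - |v|) / (|v| + k0), is at most m / k0 when |v| >= kG + k0 - m,
   so phi is bounded by (m / k0) T there. *)
Lemma phi_near_shell k0 kG kh m v i : 0 < k0 -> kh < kG -> vnonneg v ->
  kG <= 2 * vnorm v -> kG + k0 - m <= vnorm v <= kG + k0 ->
  0 <= phi gam mu k0 kG kh v i <= m / k0 * Gamma_ball_bound gam mu (kG + k0) i.
Proof.
move=> Hk0 HkG Hv Hinner Hshell; have Hn := vnorm_ge0 v; set n := vnorm v in Hn Hinner Hshell *.
have Hq := Rinv_0_lt_compat (n + k0) ltac:(lra).
have Hqk : / (n + k0) <= / k0 by apply: Rinv_le_contravar; lra.
have Hdamp : 0 <= (kG + k0 - n) * / (n + k0) <= m * / k0.
  by split; [apply: Rmult_le_pos|apply: Rmult_le_compat]; lra.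
rewrite /phi -/n Rmax_left; last by lra.
rewrite Rmin_right; last by rewrite /Rdiv; nra.
have -> : 1 + (kG - 2 * n) / (n + k0) = (kG + k0 - n) * / (n + k0) by field; lra.
have HG0 := Gamma_nonneg v i Hv.
have HGT : Gamma_mu gam mu v i <= Gamma_ball_bound gam mu (kG + k0) i.
  by apply: Gamma_le_ball => //; rewrite -/n; lra.
by rewrite /Rdiv; split; nra.
Qed.

End InducedOperator.

Section SimplexGeometry.
Context {N : nat} (delta : R) (z : 'I_N -> Z) (pi : {perm 'I_N.+1}).
Hypothesis Hdelta : 0 <= delta.

Lemma moved_none k : moved pi 0 k = false.
Proof. by apply/existsP => [[i /andP [Hi _]]]; rewrite ltn0 in Hi. Qed.

Lemma moved_all k : moved pi N.+1 k = true.
Proof. by apply/existsP; exists ((pi^-1)%g k); rewrite ltn_ord permKV eqxx. Qed.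

Lemma vertex_first_min j i :
  fst (vertex delta z pi 0) i <= fst (vertex delta z pi j) i.
Proof. by rewrite /vertex /= moved_none; case: ifP => _; lra. Qed.

Lemma vertex_last_max j i :
  fst (vertex delta z pi N.+1) i <= fst (vertex delta z pi j) i + delta.
Proof. by rewrite /vertex /= moved_all; case: ifP => _; lra. Qed.

Lemma vertex_time_range j : 0 <= snd (vertex delta z pi j) <= 1.
Proof. by rewrite /vertex /=; case: ifP => _; lra. Qed.

Lemma vertex_norm_lower j : vnonneg (fst (vertex delta z pi 0)) ->
  vnorm (fst (vertex delta z pi N.+1)) - delta * sqrt (INR N)
  <= vnorm (fst (vertex delta z pi j)).
Proof.
move=> Hfirst.
have Hup : vnorm (fst (vertex delta z pi N.+1))
           <= vnorm (fun i => fst (vertex delta z pi j) i + delta).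
  apply: vnorm_mono => i; split; last exact: vertex_last_max.
  by have := Hfirst i; have := vertex_first_min N.+1 i; lra.
have := vnorm_add (fst (vertex delta z pi j)) (fun _ => delta).
by rewrite vnorm_const //; lra.
Qed.

End SimplexGeometry.

(* A complete N-simplex carries a probability vector lam (the first column of
   the lexicographically positive solution W) whose labels average to zero. *)
Lemma complete_convex_combination {N : nat} (l : pt N -> vec N)
  (ys : 'I_N.+1 -> pt N) : complete l ys ->
  exists lam : 'I_N.+1 -> R, (forall k, 0 <= lam k) /\ sumR lam = 1 /\
    forall i, sumR (fun k => lam k * l (ys k) i) = 0.
Proof.
move=> [W [HW Hlex]]; exists (fun k => W k ord0); split; [|split].
- move=> k; have [k' [Hbefore Hpos]] := Hlex k.
  case: (posnP k') => [Hk'|Hk']; last by rewrite Hbefore //; lra.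
  have Hfirst : k' = ord0 by apply: val_inj.
  by move: Hpos; rewrite Hfirst /=; lra.
- have := HW ord0 ord0; rewrite eqxx => <-.
  by apply: sumR_ext => k; rewrite /labmat unlift_none; ring.
- move=> i; have := HW (lift ord0 i) ord0.
  rewrite eq_sym (negbTE (neq_lift ord0 i)) => <-.
  by apply: sumR_ext => k; rewrite /labmat liftK; ring.
Qed.

Lemma convex_zero_bound {n : nat} (lam theta x : 'I_n -> R) (x0 b : R) :
  (forall k, 0 <= lam k) -> sumR lam = 1 ->
  sumR (fun k => lam k * (theta k - x k)) = 0 ->
  (forall k, theta k <= b) -> (forall k, x0 <= x k) -> x0 <= b.
Proof.
move=> Hlam0 Hlam1 Hzero Htheta Hx.
have Hlow : x0 <= sumR (fun k => lam k * x k).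
  rewrite -[x0]Rmult_1_r -Hlam1 -sumR_mull.
  by apply: sumR_le => k; have := Hlam0 k; have := Hx k; nra.
have Hhigh : sumR (fun k => lam k * theta k) <= b.
  rewrite -[b]Rmult_1_r -Hlam1 -sumR_mull.
  by apply: sumR_le => k; have := Hlam0 k; have := Htheta k; nra.
have Hsplit : sumR (fun k => lam k * (theta k - x k))
   = sumR (fun k => lam k * theta k) + (-1) * sumR (fun k => lam k * x k).
  by rewrite -sumR_mull -sumR_add; apply: sumR_ext => k; ring.
lra.
Qed.

(* The heart of Theorem 5: a facet whose vertices lie in the shell
   kG/2 <= |v| < kG + k0 of an (N+1)-simplex reaching the outer boundary
   |v| >= kG + k0 cannot be complete, once delta sqrt N is small compared with
   the gap between |c| and kG/2.  Otherwise v^1 <= c + (delta sqrt N / k0) T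
   (convex_zero_bound with phi_near_shell), forcing |v^1| < kG/2. *)
Lemma outer_facet_not_complete {N : nat} (gam : 'I_N -> 'I_N -> R -> R)
  (mu : 'I_N -> vec N -> R)
  (Hgam : forall i j, K_inf (gam i j) \/ zero_fun (gam i j))
  (Hmu : forall i, MAF (mu i)) (k0 kG kh : R) (c : vec N) (delta : R)
  (z : 'I_N -> Z) (pi : {perm 'I_N.+1}) :
  0 < k0 -> kh < kG -> vgg c (@vzero N) -> 0 <= delta ->
  vnorm c + delta * sqrt (INR N) / k0 * vnorm (Gamma_ball_bound gam mu (kG + k0))
    < kG / 2 ->
  (forall j : 'I_N.+1,
     vnonneg (fst (vertex delta z pi j)) /\
     kG / 2 <= vnorm (fst (vertex delta z pi j)) /\
     vnorm (fst (vertex delta z pi j)) < kG + k0) ->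
  kG + k0 <= vnorm (fst (vertex delta z pi N.+1)) ->
  ~ complete (label gam mu k0 kG kh c) (fun j : 'I_N.+1 => vertex delta z pi j).
Proof.
move=> Hk0 HkG Hc Hdelta Hsmall Hface Hlast.
move=> /complete_convex_combination [lam [Hlam0 [Hlam1 Hlab]]].
set s := delta * sqrt (INR N) / k0; set T := Gamma_ball_bound gam mu (kG + k0).
have [Hfirst [Hfirst_inner _]] : vnonneg (fst (vertex delta z pi 0)) /\
  kG / 2 <= vnorm (fst (vertex delta z pi 0)) /\ _ := Hface ord0.
have Hphi (j : 'I_N.+1) i : 0 <= phi gam mu k0 kG kh (fst (vertex delta z pi j)) i <= s * T i.
  have [Hj [Hj_inner Hj_outer]] := Hface j.
  have := vertex_norm_lower _ _ _ Hdelta j Hfirst.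
  by move=> Hj_shell; apply: phi_near_shell => //; try split; lra.
have Hbound i : fst (vertex delta z pi 0) i <= c i + s * T i.
  apply: (convex_zero_bound lam
    (fun k : 'I_N.+1 => (1 - snd (vertex delta z pi k)) * c i
              + snd (vertex delta z pi k) * phi gam mu k0 kG kh (fst (vertex delta z pi k)) i)
    (fun k : 'I_N.+1 => fst (vertex delta z pi k) i) _ _
    Hlam0 Hlam1 (Hlab i)) => k; last exact: vertex_first_min.
  have := vertex_time_range delta z pi k; have := Hphi k i; have := Hc i.
  by rewrite /vzero; nra.
have Hs : 0 <= s by apply: Rmult_le_pos; [apply: Rmult_le_pos; [|apply: sqrt_pos]|
  apply/Rlt_le/Rinv_0_lt_compat]; lra.
have Hfirst_le : vnorm (fst (vertex delta z pi 0)) <= vnorm (fun i => c i + s * T i).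
  by apply: vnorm_mono => i; split; [exact: Hfirst|exact: Hbound].
have := vnorm_add c (fun i => s * T i); rewrite vnorm_scal //.
by move: Hsmall; rewrite -/s -/T; lra.
Qed.

Lemma small_positive A B C : 0 < A -> 0 <= B -> 0 < C ->
  exists m, 0 < m /\ m <= A /\ m * B < C.
Proof.
move=> HA HB HC; set q := C / (B + 1).
have Hq : 0 < q by apply: Rdiv_lt_0_compat; lra.
have HqB : q * B + q = C by rewrite /q; field; lra.
exists (Rmin A q); split; first by apply: Rmin_glb_lt.
split; first exact: Rmin_l.
have := Rmin_r A q; have : 0 <= Rmin A q by apply: Rmin_glb; lra.
nra.
Qed.

Theorem mainTheorem5 (N : nat) (HN : (1 <= N)%N)
  (gam : 'I_N -> 'I_N -> R -> R) (mu : 'I_N -> vec N -> R)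
  (Hgam : forall i j, K_inf (gam i j) \/ zero_fun (gam i j))
  (Hmu : forall i, MAF (mu i))
  (Hsg : forall s : vec N, vnonneg s -> s <> @vzero N ->
           ~ vge (Gamma_mu gam mu s) s)
  (Hrow : forall i, Gamma_mu gam mu (@vones N) i <> 0)
  (k0 kG kh : R) (Hk0 : 0 < k0) (Hkh : 0 < kh) (HkG : kh < kG)
  (c : vec N) (Hc : vgg c (@vzero N)) (Hcn : vnorm c < kG / 2) :
  exists delta : R, 0 < delta /\
    (forall (z : 'I_N -> Z) (pi : {perm 'I_N.+1}),
       (forall j : 'I_N.+1,
          vnonneg (fst (vertex delta z pi j)) /\
          kG / 2 <= vnorm (fst (vertex delta z pi j)) /\
          vnorm (fst (vertex delta z pi j)) < kG + k0) ->
       kG + k0 <= vnorm (fst (vertex delta z pi N.+1)) ->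
       vnorm (fst (vertex delta z pi N.+1)) <= kG + k0 + delta ->
       ~ complete (label gam mu k0 kG kh c)
                  (fun j : 'I_N.+1 => vertex delta z pi j)) /\
    delta * sqrt (INR N) < (kG - kh) / 2 /\
    (forall v w : vec N, vnonneg v -> phi gam mu k0 kG kh v = v ->
       vnonneg w -> vnorm (vsub w v) < delta * sqrt (INR N) ->
       vnorm w < kG / 2).
Proof.
set T := Gamma_ball_bound gam mu (kG + k0).
have HsqrtN : 0 < sqrt (INR N) by apply/sqrt_lt_R0/lt_0_INR/ltP.
(* m = delta sqrt N must be below (kG - kh)/2 and below the gap
   (kG/2 - |c|) k0 / |T| demanded by outer_facet_not_complete. *)
have [m [Hm [Hm_gap Hm_small]]] := @small_positive ((kG - kh) / 4)
  (vnorm T / k0) (kG / 2 - vnorm c) ltac:(lra)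
  (Rmult_le_pos _ _ (vnorm_ge0 T) (Rlt_le _ _ (Rinv_0_lt_compat _ Hk0))) ltac:(lra).
exists (m / sqrt (INR N)).
have Hdelta_m : m / sqrt (INR N) * sqrt (INR N) = m by field; lra.
rewrite Hdelta_m; split; first exact: Rdiv_lt_0_compat.
split; [|split; first lra].
- move=> z pi Hface Hlast _; apply: outer_facet_not_complete => //.
  + by apply/Rlt_le/Rdiv_lt_0_compat.
  + rewrite Hdelta_m -/T.
    have -> : m / k0 * vnorm T = m * (vnorm T / k0) by field; lra.
    lra.
- move=> v w Hv Hfix _ Hwv.
  by apply: (near_phi_fixed_point_small Hgam Hmu Hsg Hkh _ Hv Hfix Hwv); lra.
Qed.
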